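(* For all integers $N\ge 1$ and $D\ge 0$ there exists a $(3D+1)$-$(3D+1,N,D)$-tropical protocol.
   Context: Tropical arithmetic on $\mathbb{R}\cup\{\infty\}$: $x\oplus y=\min(x,y)$, $x\odot y=x+y$, with $x\oplus\infty=x$ and $x\odot\infty=\infty$; for a matrix $S$ and vector $\mathbf{x}$, $(S\odot\mathbf{x})_t=\min_j(S_{tj}+x_j)$. An $R$-$(T,N,D)$-tropical protocol consists of $R$ functions $\mathcal{S}^{(1)},\dots,\mathcal{S}^{(R)}$: $S^{(1)}=\mathcal{S}^{(1)}()$ is a fixed matrix, and for $r\ge 2$, $S^{(r)}=\mathcal{S}^{(r)}$ applied to the results $\bigl(S^{(1)};\dots;S^{(r-1)}\bigr)\odot\mathbf{x}$ of all previous rounds (vertical stacking); each $S^{(r)}$ has $N$ columns, entries in $\{0\}\cup\mathbb{N}\cup\{\infty\}$, and a number of rows that may depend on previous results, the total number of rows being at most $T$ for every $\mathbf{x}$; and the final result $\bigl(S^{(1)};\dots;S^{(R)}\bigr)\odot\mathbf{x}$ determines $\mathbf{x}$ uniquely among all $\mathbf{x}\in(\{0\}\cup\mathbb{N}\cup\{\infty\})^N$ with at most $D$ finite entries. It is within maximum delay $\ell$ if all schedule matrices use only entries in $\{0,1,\dots,\ell,\infty\}$. *)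

From mathcomp Require Import all_boot.
Set Implicit Arguments. Unset Strict Implicit. Unset Printing Implicit Defensive.

(* Extended naturals {0} ∪ N ∪ {∞}: [Some n] = n, [None] = ∞. *)
Definition enat := option nat.

Definition tplus (a b : enat) : enat :=
  match a, b with
  | None, _ => b
  | _, None => a
  | Some m, Some n => Some (minn m n)
  end.

Definition ttimes (a b : enat) : enat :=
  match a, b with
  | Some m, Some n => Some (m + n)
  | _, _ => None
  end.

Definition trow (N : nat) := 'I_N -> enat.
Definition tmatrix (N : nat) := seq (trow N).

Definition trop_apply (N : nat) (S : tmatrix N) (x : {ffun 'I_N -> enat}) : seq enat :=
  map (fun row => \big[tplus/None]_(j < N) ttimes (row j) (x j)) S.

(* A protocol is given by its round functions: round r (0-based, i.e. S^(r+1))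
   maps the stacked results of all previous rounds to the schedule matrix of
   that round.  Round 0 is only applied to the empty list of results, so
   S^(1) is a fixed matrix. *)
Definition tprotocol (N : nat) := nat -> seq enat -> tmatrix N.

Fixpoint tresults (N : nat) (P : tprotocol N) (k : nat) (x : {ffun 'I_N -> enat})
  : seq enat :=
  match k with
  | 0 => [::]
  | k'.+1 =>
      let prev := tresults P k' x in
      prev ++ trop_apply (P k' prev) x
  end.

Definition nfinite (N : nat) (x : {ffun 'I_N -> enat}) : nat :=
  #|[set j | x j != None]|.

Definition is_tropical_protocol (R T N D : nat) (P : tprotocol N) : Prop :=
  (forall x : {ffun 'I_N -> enat}, size (tresults P R x) <= T) /\
  (forall x y : {ffun 'I_N -> enat}, nfinite x <= D -> nfinite y <= D ->
     tresults P R x = tresults P R y -> x = y).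
Arguments is_tropical_protocol R T N D P : clear implicits.

From HB Require Import structures.
From mathcomp Require Import all_boot zify.
Set Implicit Arguments. Unset Strict Implicit. Unset Printing Implicit Defensive.

(* Every round asks a single row, i.e. the tropical value min_(j in B) (w j + x j).
   Unexplored coordinates sit in a pool; coordinates under investigation are
   grouped into blocks, each with a known minimum m1 = min (w j + x j) and
   pairwise distinct delays d j.  One more query gives
   m2 = min (w j + d j + x j); a coordinate attaining m2 has delay at most
   c = m2 - m1.  A third query (weight 0 on delay c, weights above m1 + m2 on
   smaller delays) then either reads off x e for the unique e of delay c, or
   shows that x e is large and splits the block at delay c into two blocks
   whose minima are again known.  The potential
   1 + 3 #(finite in pool) + sum over blocks (3 #(finite in block) - 1 - [m2 known])
   drops by at least one per round and starts at 1 + 3 D, so after 3 D + 1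
   rounds the protocol has halted with x fully learned. *)

Lemma tplusA : associative tplus.
Proof. by case=> [a|] [b|] [c|] //=; rewrite minnA. Qed.

Lemma tplusC : commutative tplus.
Proof. by case=> [a|] [b|] //=; rewrite minnC. Qed.

Lemma tplus0 : left_id None tplus.
Proof. by case. Qed.

HB.instance Definition _ := Monoid.isComLaw.Build enat None tplus tplusA tplusC tplus0.

Lemma tplus_sel a b : tplus a b = a \/ tplus a b = b.
Proof. by case: a b => [a|] [b|] /=; auto; rewrite /minn; case: ltnP; auto. Qed.

Section SingleRowQuery.
Variable N : nat.
Implicit Types (B : {set 'I_N}) (w : 'I_N -> nat) (x : {ffun 'I_N -> enat}).

Definition row_on B w : trow N := fun j => if j \in B then Some (w j) else None.

Definition tquery B w x : enat := \big[tplus/None]_(j < N) ttimes (row_on B w j) (x j).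

Definition is_tmin B w x s :=
  (forall j n, j \in B -> x j = Some n -> s <= w j + n) /\
  (exists j n, [/\ j \in B, x j = Some n & w j + n = s]).

Lemma tquery_le B w x j n s :
  j \in B -> x j = Some n -> tquery B w x = Some s -> s <= w j + n.
Proof.
move=> jB xj; rewrite /tquery (bigD1 j) //= {1}/row_on jB xj /=.
by case: (\big[_/_]_(i < N | i != j) _) => [b|] /= [<-]; rewrite ?geq_minl.
Qed.

Lemma tquery_attained B w x s : tquery B w x = Some s ->
  exists j n, [/\ j \in B, x j = Some n & w j + n = s].
Proof.
rewrite /tquery; elim/big_ind: _ => //.
- by move=> a b IHa IHb; case: (tplus_sel a b) => ->.
- move=> j _; rewrite /row_on; case: ifP => // jB.
  by case E: (x j) => [n|] //= [<-]; exists j, n.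
Qed.

Lemma tqueryP B w x s : tquery B w x = Some s -> is_tmin B w x s.
Proof.
by move=> q; split; [move=> j n jB xj; apply: tquery_le q | apply: tquery_attained].
Qed.

Lemma tquery_neq_None B w x j n : j \in B -> x j = Some n -> tquery B w x <> None.
Proof.
move=> jB xj; rewrite /tquery (bigD1 j) //= {1}/row_on jB xj /=.
by case: (\big[_/_]_(i < N | i != j) _).
Qed.

End SingleRowQuery.

Section Protocol.
Variable N : nat.

Record block := Block {
  bset : {set 'I_N}; bweight : 'I_N -> nat; bdelay : 'I_N -> nat;
  bmin : nat; bdmin : option nat }.

Record state := State {
  known : {ffun 'I_N -> option nat}; pool : {set 'I_N};
  stack : seq block; halted : bool }.

Definition dweight (b : block) j := bweight b j + bdelay b j.

(* The low part of a block whose probe returned [r > bmin b + s2]: the probe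
   weights are its [dweight], so its second minimum is [r]. *)
Definition low_block (b : block) (s2 r : nat) : block :=
  let c := s2 - bmin b in
  Block [set j in bset b | bdelay b j <= c]
        (fun j => if bdelay b j == c then 0 else dweight b j + bmin b)
        (fun j => if bdelay b j == c then 0 else (bdelay b j).+1)
        (bmin b + s2) (Some r).

Definition high_block (b : block) (s2 : nat) : block :=
  Block [set j in bset b | s2 - bmin b < bdelay b j]
        (bweight b) (bdelay b) (bmin b) None.

Definition query (s : state) : option ({set 'I_N} * ('I_N -> nat)) :=
  if halted s then None else
  match stack s with
  | [::] => Some (pool s, fun _ => 0)
  | b :: _ => match bdmin b with
              | None => Some (bset b, dweight b)
              | Some s2 => Some (bset (low_block b s2 0), dweight (low_block b s2 0))
              end
  end.

Definition learn (l : {ffun 'I_N -> option nat}) e v :=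
  [ffun j => if j == e then Some v else l j].

Definition update (s : state) (r : enat) : state :=
  match stack s with
  | [::] => match r with
            | None => State (known s) (pool s) [::] true
            | Some v => State (known s) set0
                  [:: Block (pool s) (fun _ => 0) (fun j => nat_of_ord j) v None] false
            end
  | b :: rest =>
    match bdmin b, r with
    | None, Some s2 =>
        State (known s) (pool s) (Block (bset b) (bweight b) (bdelay b) (bmin b) (Some s2) :: rest) false
    | Some s2, Some v =>
        if v <= bmin b + s2 then
          match [pick j in bset b | bdelay b j == s2 - bmin b] with
          | Some e =>
            (* once e is gone, the block minimum is unknown again *)
            if bweight b e + v == bmin b then
              State (learn (known s) e v) (pool s :|: (bset b :\ e)) rest false
            else State (learn (known s) e v) (pool s)
                   (Block (bset b :\ e) (bweight b) (bdelay b) (bmin b) (Some s2) :: rest) false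
          | None => s
          end
        else State (known s) (pool s) (low_block b s2 v :: high_block b s2 :: rest) false
    | _, None => s
    end
  end.

Definition step (x : {ffun 'I_N -> enat}) (s : state) : state :=
  if query s is Some (B, w) then update s (tquery B w x) else s.

Definition init : state := State [ffun _ => None] setT [::] false.

End Protocol.

Section Invariant.
Variables (N : nat) (x : {ffun 'I_N -> enat}).
Implicit Types (A B : {set 'I_N}) (b : block N) (st : state N).

Definition block_ok b :=
  [/\ is_tmin (bset b) (bweight b) x (bmin b),
      (forall s2, bdmin b = Some s2 -> is_tmin (bset b) (dweight b) x s2) &
      {in bset b &, injective (bdelay b)}].

Definition covered st j :=
  j \in pool st \/ exists2 b, List.In b (stack st) & j \in bset b.

Definition invariant st :=
  [/\ forall j v, known st j = Some v -> x j = Some v,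
      forall j n, known st j = None -> x j = Some n -> covered st j,
      forall b, List.In b (stack st) -> block_ok b &
      halted st -> stack st = [::] /\ forall j, j \in pool st -> x j = None].

Definition nfin_in B := #|[set j in B | x j != None]|.

Definition block_potential b :=
  3 * nfin_in (bset b) - 1 - (if bdmin b is Some _ then 1 else 0).

Definition potential st :=
  if halted st then 0
  else 1 + 3 * nfin_in (pool st) + \sum_(b <- stack st) block_potential b.

Lemma nfin_in0 : nfin_in set0 = 0.
Proof. by apply/eqP; rewrite cards_eq0; apply/eqP/setP=> j; rewrite !inE. Qed.

Lemma nfin_inT : nfin_in setT = nfinite x.
Proof. by apply: eq_card => j; rewrite !inE. Qed.

Lemma nfin_inU A B : nfin_in (A :|: B) <= nfin_in A + nfin_in B.
Proof.
rewrite /nfin_in; apply: leq_trans (leq_card_setU [set j in A | x j != None] [set j in B | x j != None]).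
by apply: subset_leq_card; apply/subsetP=> j; rewrite !inE andb_orl.
Qed.

Lemma nfin_inD1 B e n : e \in B -> x e = Some n -> (nfin_in (B :\ e)).+1 = nfin_in B.
Proof.
move=> eB xe; rewrite /nfin_in (cardsD1 e [set j in B | x j != None]) !inE eB xe /=.
by congr _.+1; apply: eq_card => j; rewrite !inE andbA.
Qed.

Lemma nfin_in_split B (P : pred 'I_N) :
  nfin_in B = nfin_in [set j in B | P j] + nfin_in [set j in B | ~~ P j].
Proof.
rewrite /nfin_in -(cardsID [set j | P j] [set j in B | x j != None]); congr (_ + _);
by apply: eq_card => j; rewrite !inE; case: (j \in B); case: (P j); case: (x j != None).
Qed.

Lemma nfin_in_gt0 B w s : is_tmin B w x s -> 0 < nfin_in B.
Proof.
case=> _ [j [n [jB xj _]]]; rewrite card_gt0; apply/set0Pn; exists j.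
by rewrite !inE jB xj.
Qed.

End Invariant.

Section Blocks.
Variables (N : nat) (x : {ffun 'I_N -> enat}).
Implicit Types (b : block N).

Lemma bmin_le_bdmin b s2 : block_ok x b -> bdmin b = Some s2 -> bmin b <= s2.
Proof.
case=> [[lb _] M2 _] /M2 [_ [a [na [aB xa <-]]]].
by have := lb a na aB xa; rewrite /dweight; lia.
Qed.

Lemma block_nfin_gt0 b : block_ok x b -> 0 < nfin_in x (bset b).
Proof. by case=> /nfin_in_gt0. Qed.

Lemma dweight_low_block b s2 r j :
  dweight (low_block b s2 r) j =
  if bdelay b j == s2 - bmin b then 0 else dweight b j + bdelay b j + bmin b + 1.
Proof. by rewrite {1}/dweight /=; case: ifP => _ //; rewrite /dweight; lia. Qed.

Lemma block_ok_setD1 b e n s2 :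
  block_ok x b -> bdmin b = Some s2 -> e \in bset b -> x e = Some n ->
  bweight b e + n != bmin b -> dweight b e + n != s2 ->
  block_ok x (Block (bset b :\ e) (bweight b) (bdelay b) (bmin b) (Some s2)).
Proof.
move=> [[lb1 at1] M2 inj] bd eB xe ne1 ne2; have [lb2 at2] := M2 _ bd.
split => /=.
- split=> [j m|]; first by rewrite inE => /andP[_]; apply: lb1.
  case: at1 => [t [nt [tB xt ht]]]; exists t, nt; split => //.
  rewrite !inE tB andbT; apply: contraNneq ne1 => te.
  by move: xt ht; rewrite te xe => -[<-] ->.
- move=> _ [<-]; split=> [j m|]; first by rewrite inE => /andP[_]; apply: lb2.
  case: at2 => [a [na [aB xa ha]]]; exists a, na; split => //.
  rewrite !inE aB andbT; apply: contraNneq ne2 => ae.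
  by move: xa ha; rewrite ae xe => -[<-] ->.
- by move=> j k /setD1P[_ jB] /setD1P[_ kB]; apply: inj.
Qed.

Lemma nfin_in_low_high b s2 r :
  nfin_in x (bset b) = nfin_in x (bset (low_block b s2 r)) + nfin_in x (bset (high_block b s2)).
Proof.
rewrite (nfin_in_split x (bset b) (fun j => bdelay b j <= s2 - bmin b)); congr (_ + _).
by congr nfin_in; apply/setP=> j; rewrite !inE -ltnNge.
Qed.

Lemma probe_neq_None b s2 : block_ok x b -> bdmin b = Some s2 ->
  tquery (bset (low_block b s2 0)) (dweight (low_block b s2 0)) x <> None.
Proof.
move=> b_ok bd; have s12 := bmin_le_bdmin b_ok bd.
case: b_ok => [[lb1 _] M2 _]; have [_ [a [na [aB xa ha]]]] := M2 _ bd.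
apply: (tquery_neq_None _ xa); rewrite inE aB.
by have := lb1 a na aB xa; rewrite /dweight in ha; lia.
Qed.

Section Probe.
Variables (b : block N) (s2 v : nat).
Hypotheses (b_ok : block_ok x b) (bd : bdmin b = Some s2).
Hypothesis probe_min :
  is_tmin (bset (low_block b s2 0)) (dweight (low_block b s2 0)) x v.

Let c := s2 - bmin b.

(* Off delay [c] the probe weights exceed [bmin b + s2], so a probe value
   below that bound is read off the unique element of delay [c]. *)
Lemma probe_resolves : v <= bmin b + s2 ->
  exists e, [/\ [pick j in bset b | bdelay b j == c] = Some e,
                e \in bset b, bdelay b e = c & x e = Some v].
Proof.
case: b_ok => [_ M2 inj] hv; have [lb2 _] := M2 _ bd.
case: probe_min => _ [j [n [/setIdP[jB _] xj]]].
rewrite dweight_low_block; case: ifP => [/eqP dj|_] hj; last first.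
  by exfalso; have := lb2 j n jB xj; lia.
case: pickP => [e /andP[eB /eqP de]|none]; last by have := none j; rewrite jB dj eqxx.
by exists e; split => //; rewrite (inj e j) // ?de ?dj // xj -hj.
Qed.

Hypothesis hv : bmin b + s2 < v.

Lemma delay_c_large j n : j \in bset b -> bdelay b j = c -> x j = Some n ->
  bmin b + s2 < n.
Proof.
move=> jB dj xj; have jL : j \in bset (low_block b s2 0) by rewrite inE jB dj leqnn.
by have := probe_min.1 j n jL xj; rewrite dweight_low_block dj eqxx; lia.
Qed.

Lemma low_block_ok : block_ok x (low_block b s2 v).
Proof.
have s12 := bmin_le_bdmin b_ok bd.
case: b_ok => [[lb1 _] M2 inj]; have [lb2 [a [na [aB xa ha]]]] := M2 _ bd.
split.
- split=> [j n /setIdP[jB _] xj|] /=.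
    case: ifP => [/eqP dj|_]; first by have := delay_c_large jB dj xj; lia.
    by have := lb2 j n jB xj; rewrite /dweight; lia.
  have al := lb1 a na aB xa; rewrite /dweight in ha.
  have dan : bdelay b a != c by apply/eqP=> /(delay_c_large aB)/(_ xa); lia.
  exists a, na; split => //; first by rewrite inE aB /c; lia.
  by rewrite (negbTE dan) /dweight; lia.
- by move=> _ [<-]; exact: probe_min.
- move=> j k /setIdP[jB _] /setIdP[kB _] /=.
  case: ifP => [/eqP dj|_]; case: ifP => [/eqP dk|_] //.
  + by move=> _; apply: inj => //; rewrite dj dk.
  + by move=> [] /inj; apply.
Qed.

Lemma high_block_ok : block_ok x (high_block b s2).
Proof.
case: b_ok => [[lb1 [t [nt [tB xt ht]]]] M2 inj]; have [lb2 _] := M2 _ bd.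
split => //=.
- split=> [j n /setIdP[jB _]|]; first exact: lb1.
  exists t, nt; split => //; rewrite inE tB /=.
  have := lb2 t nt tB xt; rewrite /dweight => h.
  rewrite ltn_neqAle andbC; apply/andP; split; first by rewrite /c; lia.
  by apply/eqP=> /esym /(delay_c_large tB)/(_ xt); lia.
- by move=> j k /setIdP[jB _] /setIdP[kB _]; apply: inj.
Qed.

End Probe.
End Blocks.

Section Step.
Variables (N : nat) (x : {ffun 'I_N -> enat}).
Implicit Types (st : state N) (b : block N) (l : {ffun 'I_N -> option nat})
  (p : {set 'I_N}).

Definition advances st st' := invariant x st' /\ potential x st' < potential x st.

Lemma covered_replace_top l p b rest (h : bool) st' j :
  p \subset pool st' -> (forall b0, List.In b0 rest -> List.In b0 (stack st')) ->
  (j \in bset b -> covered st' j) ->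
  covered (State l p (b :: rest) h) j -> covered st' j.
Proof.
move=> /subsetP sp srest sb [jp|[b0 [<-|b0r] jb0]]; first by left; apply: sp.
- exact: sb.
- by right; exists b0; first apply: srest.
Qed.

Lemma learn_sound l e v :
  (forall j u, l j = Some u -> x j = Some u) -> x e = Some v ->
  forall j u, learn l e v j = Some u -> x j = Some u.
Proof. by move=> lx xe j u; rewrite ffunE; case: eqP => [-> [<-]|_] //; apply: lx. Qed.

Lemma learn_None l e v j :
  learn l e v j = None -> j != e /\ l j = None.
Proof. by rewrite ffunE; case: eqP. Qed.

Lemma advance_from_pool l p (st := State l p [::] false) :
  invariant x st -> advances st (update st (tquery p (fun _ => 0) x)).
Proof.
case=> /= lx cov _ _; rewrite /update /=.
case Er: (tquery p _ x) => [v|].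
- split; first split => //=.
  + move=> j n lj xj; right.
    exists (Block p (fun _ => 0) (fun j => nat_of_ord j) v None); first by left.
    by case: (cov j n lj xj) => // [][].
  + move=> b [<-|[]]; split => //=; first exact: tqueryP Er.
    by move=> j k _ _; apply: ord_inj.
  + rewrite /potential /= big_cons big_nil nfin_in0 /block_potential /=.
    by have := nfin_in_gt0 (tqueryP Er); lia.
- split; first split => //=.
  + by split => // j jp; case E: (x j) => [n|] //; case: (tquery_neq_None jp E Er).
  + by rewrite /potential /=; lia.
Qed.

Section TopBlock.
Variables (l : {ffun 'I_N -> option nat}) (p : {set 'I_N}) (b : block N) (rest : seq (block N)).
Let st := State l p (b :: rest) false.
Hypothesis st_ok : invariant x st.

Lemma top_block_ok : block_ok x b.
Proof. by case: st_ok => _ _ /(_ b (or_introl erefl)). Qed.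

Lemma potential_top : potential x st =
  1 + 3 * nfin_in x p + block_potential x b + \sum_(b0 <- rest) block_potential x b0.
Proof. by rewrite /potential /= big_cons addnA. Qed.

Lemma advance_record_bdmin : bdmin b = None ->
  advances st (update st (tquery (bset b) (dweight b) x)).
Proof.
case: st_ok => /= lx cov rest_ok _ bd; have [b1 _ inj] := top_block_ok.
case Er: tquery => [s2|]; last first.
  by case: b1 => _ [j [n [jB xj _]]]; case: (tquery_neq_None jB xj Er).
rewrite /update /= bd; set b' := Block _ _ _ _ (Some s2).
split; first split => //=.
- move=> j n lj xj; apply: covered_replace_top (cov j n lj xj) => //=.
  + by move=> b0 b0r; right.
  + by move=> jb; right; exists b'; first left.
- move=> b0 [<-|b0r]; last by apply: rest_ok; right.
  by split => //= _ [<-]; exact: tqueryP Er.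
- have := block_nfin_gt0 top_block_ok.
  by rewrite potential_top /potential /= big_cons /block_potential /= bd; lia.
Qed.

Variables (s2 v : nat).
Hypotheses (bd : bdmin b = Some s2)
  (Er : tquery (bset (low_block b s2 0)) (dweight (low_block b s2 0)) x = Some v).

Lemma advance_resolve : v <= bmin b + s2 -> advances st (update st (Some v)).
Proof.
move=> hv; have b_ok := top_block_ok; have s12 := bmin_le_bdmin b_ok bd.
have [e [pe eB de xe]] := probe_resolves b_ok bd (tqueryP Er) hv.
case: st_ok => /= lx cov rest_ok _.
have lx' := learn_sound lx xe.
have ne := nfin_inD1 eB xe; have := block_nfin_gt0 b_ok.
rewrite /update /= bd hv pe; case: ifP => [/eqP e_min | /negbT e_min] B_gt0.
- split; first split => //=.
  + move=> j n /learn_None[je lj] xj.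
    apply: covered_replace_top (cov j n lj xj) => //= [|jb].
      by apply/subsetP => i ip; rewrite inE ip.
    by left; rewrite !inE je jb orbT.
  + by move=> b0 b0r; apply: rest_ok; right.
  + rewrite potential_top /potential /= /block_potential bd.
    by have := nfin_inU x p (bset b :\ e); lia.
- have e_dmin : dweight b e + v != s2.
    by apply: contraNneq e_min; rewrite /dweight de => h; apply/eqP; lia.
  set b' := Block (bset b :\ e) (bweight b) (bdelay b) (bmin b) (Some s2).
  have b'_ok : block_ok x b' := block_ok_setD1 b_ok bd eB xe e_min e_dmin.
  split; first split => //=.
  + move=> j n /learn_None[je lj] xj.
    apply: covered_replace_top (cov j n lj xj) => //= [b0 b0r|jb]; first by right.
    by right; exists b'; [left | rewrite !inE je jb].
  + by move=> b0 [<-|b0r] //; apply: rest_ok; right.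
  + by rewrite potential_top /potential /= big_cons /block_potential /b' /= bd; lia.
Qed.

Lemma advance_split : bmin b + s2 < v -> advances st (update st (Some v)).
Proof.
move=> hv; have b_ok := top_block_ok.
have lo_ok := low_block_ok b_ok bd (tqueryP Er) hv.
have hi_ok := high_block_ok b_ok bd (tqueryP Er) hv.
case: st_ok => /= lx cov rest_ok _.
rewrite /update /= bd leqNgt hv /=.
split; first split => //=.
- move=> j n lj xj; apply: covered_replace_top (cov j n lj xj) => //= [b0 b0r|jb].
    by right; right.
  right; case: (leqP (bdelay b j) (s2 - bmin b)) => hj.
  + by exists (low_block b s2 v); [left | rewrite inE jb hj].
  + by exists (high_block b s2); [right; left | rewrite inE jb hj].
- by move=> b0 [<-|[<-|b0r]] //; apply: rest_ok; right.
- have := block_nfin_gt0 lo_ok; have := block_nfin_gt0 hi_ok.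
  have := nfin_in_low_high x b s2 v.
  rewrite potential_top /potential /= !big_cons /block_potential /= bd.
  lia.
Qed.

End TopBlock.

Lemma step_advances st : invariant x st -> halted st = false -> advances st (step x st).
Proof.
case: st => l p [|b rest] h st_ok /= h0; subst h; rewrite /step /query /=.
  exact: advance_from_pool.
case bd: (bdmin b) => [s2|]; last exact: advance_record_bdmin.
case Er: tquery => [v|]; last first.
  by case: (probe_neq_None (top_block_ok st_ok) bd Er).
case: (leqP v (bmin b + s2)) => hv.
- exact: (advance_resolve st_ok bd Er hv).
- exact: (advance_split st_ok bd Er hv).
Qed.

End Step.

Section Decoding.
Variable N : nat.

Definition replay (rs : seq enat) : state N :=
  foldl (fun st r => if halted st then st else update st r) (init N) rs.

Definition adaptive_protocol : tprotocol N := fun _ prev =>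
  if query (replay prev) is Some (B, w) then [:: row_on B w] else [::].

Lemma replay_tresults x k :
  replay (tresults adaptive_protocol k x) = iter k (step x) (init N).
Proof.
elim: k => //= k IH; rewrite /replay foldl_cat -/(replay _) IH /adaptive_protocol IH.
rewrite /step; case E: (query _) => [[B w]|] //=.
by move: E; rewrite /query; case: halted.
Qed.

Lemma size_tresults x k : size (tresults adaptive_protocol k x) <= k.
Proof.
elim: k => //= k IH; rewrite size_cat /trop_apply size_map -addn1 leq_add //.
by rewrite /adaptive_protocol; case: (query _) => [[B w]|].
Qed.

Lemma step_halted x (st : state N) : halted st -> step x st = st.
Proof. by rewrite /step /query => ->. Qed.

Lemma invariant_iter x k : invariant x (iter k (step x) (init N)).
Proof.
elim: k => [|k IH] /=.
  by split => //= j n; rewrite ffunE // => _ _; left; rewrite inE.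
case h: (halted (iter k (step x) (init N))); first by rewrite step_halted.
by case: (step_advances IH h).
Qed.

Lemma potential_iter x k : halted (iter k (step x) (init N)) = false ->
  k + potential x (iter k (step x) (init N)) <= potential x (init N).
Proof.
elim: k => [|k IH] //= h.
case h': (halted (iter k (step x) (init N))); first by move: h; rewrite step_halted ?h'.
have [_ lt] := step_advances (invariant_iter x k) h'.
by have := IH h'; lia.
Qed.

Lemma potential_init x : potential x (init N) = 1 + 3 * nfinite x.
Proof. by rewrite /potential /= big_nil nfin_inT addn0. Qed.

Lemma halted_iter x D : nfinite x <= D -> halted (iter (3 * D + 1) (step x) (init N)).
Proof.
move=> hD; apply: contraFT (ltnn (3 * D + 1)) => /negbTE h.
by have := potential_iter h; rewrite potential_init {1}/potential h; lia.
Qed.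

Lemma known_halted x (st : state N) : invariant x st -> halted st -> x = known st.
Proof.
case=> lx cov _ /[apply] -[stack0 pool_inf]; apply/ffunP=> j.
case E: (known st j) => [v|]; first exact: lx.
case X: (x j) => [n|] //; case: (cov j n E X) => [jp|[b]].
  by rewrite pool_inf in X.
by rewrite stack0.
Qed.

End Decoding.


Theorem mainTheorem17 (N D : nat) : 1 <= N ->
  exists P : tprotocol N, is_tropical_protocol (3 * D + 1) (3 * D + 1) N D P.
Proof.
move=> _; exists (adaptive_protocol N); split => [x|]; first exact: size_tresults.
move=> x y hx hy E.
rewrite (known_halted (invariant_iter x _) (halted_iter hx)).
rewrite (known_halted (invariant_iter y _) (halted_iter hy)).
by rewrite -!replay_tresults E.
Qed.
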